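(* Let $n$ be a positive integer and let $\mathcal{B}$ be a balanced bipartite graph on $2n$ vertices with parts $V_1$ and $V_2$. If $\delta(\mathcal{B})\geq \frac{n}{2}+1$, then $f(\mathcal{B})=n+1$.
   Context: All graphs are finite and simple. A balanced bipartite graph on $2n$ vertices is a bipartite graph with a given bipartition $(V_1,V_2)$ where $|V_1|=|V_2|=n$ (every edge joins a vertex of $V_1$ to a vertex of $V_2$). $\delta(G)$ denotes the minimum degree of $G$. For $S\subseteq V(G)$, $G[S]$ denotes the induced subgraph on $S$. The forest number $f(G)$ is the maximum cardinality of a subset $S\subseteq V(G)$ such that $G[S]$ is a forest (acyclic). *)

From mathcomp Require Import all_boot.
Set Implicit Arguments. Unset Strict Implicit. Unset Printing Implicit Defensive.

Definition simple_graph (T : finType) (e : rel T) : Prop :=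
  symmetric e /\ irreflexive e.

Definition deg (T : finType) (e : rel T) (v : T) : nat := #|[set u | e v u]|.

Definition balanced_bipartite (T : finType) (e : rel T) (n : nat)
  (V1 V2 : {set T}) : Prop :=
  [/\ [disjoint V1 & V2], V1 :|: V2 = [set: T], #|V1| = n, #|V2| = n &
      forall x y, e x y -> (x \in V1 /\ y \in V2) \/ (x \in V2 /\ y \in V1)].

Definition has_cycle_in (T : finType) (e : rel T) (S : {set T}) : Prop :=
  exists p : seq T, [/\ 2 < size p, uniq p, all (fun x => x \in S) p & cycle e p].

Definition induced_forest (T : finType) (e : rel T) (S : {set T}) : Prop :=
  ~ has_cycle_in e S.

Definition forest_number_is (T : finType) (e : rel T) (k : nat) : Prop :=
  (exists S : {set T}, induced_forest e S /\ #|S| = k) /\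
  (forall S : {set T}, induced_forest e S -> #|S| <= k).

From mathcomp Require Import all_boot zify.

Set Implicit Arguments.
Unset Strict Implicit.
Unset Printing Implicit Defensive.

(* An induced forest on k vertices has at most k - 1 edges.  For a vertex set
   S of a balanced bipartite graph with a = |S :&: V1| <= b = |S :&: V2|, every
   vertex of S :&: V1 has at least (n + 2)/2 neighbours, of which at most n - b
   lie outside S; hence G[S] has at least a (b - n/2 + 1) edges, which is
   at least a + b as soon as a + b >= n + 2.  Conversely V1 together with one
   vertex of V2 induces a star plus isolated vertices. *)

Section InducedSubgraph.
Variables (T : finType) (e : rel T).
Hypotheses (esym : symmetric e) (eirr : irreflexive e).
Implicit Types (S A I X Y : {set T}) (p : seq T) (v x y z : T).

Definition deg_in (S : {set T}) (x : T) : nat := #|[set y in S | e x y]|.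

Definition degsum_in (S : {set T}) : nat := \sum_(x in S) deg_in S x.

Lemma deg_in_sum S x : deg_in S x = \sum_(y in S) e x y.
Proof.
rewrite /deg_in -sum1_card big_mkcond [RHS]big_mkcond /=.
by apply: eq_bigr => y _; rewrite inE; case: (y \in S); case: (e x y).
Qed.

Lemma deg_inI S {A x} :
  (forall y, e x y -> y \in A) -> deg_in S x = deg_in (S :&: A) x.
Proof.
move=> nbA; apply: eq_card => y; rewrite !inE.
by case exy: (e x y); rewrite ?andbF // nbA ?andbT.
Qed.

Lemma deg_inD1 S v x : v \in S -> deg_in S x = e x v + deg_in (S :\ v) x.
Proof.
move=> vS; rewrite /deg_in (cardsD1 v) !inE vS /=; congr (_ + _).
by apply: eq_card => y; rewrite !inE andbA.
Qed.

Lemma degsum_inD1 S v :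
  v \in S -> degsum_in S = degsum_in (S :\ v) + 2 * deg_in S v.
Proof.
move=> vS; rewrite /degsum_in (bigD1 v) //=.
rewrite (eq_bigl [in S :\ v]) => [|u]; last by rewrite !inE andbC.
rewrite (eq_bigr (fun u => e u v + deg_in (S :\ v) u)) => [|u _]; last first.
  exact: deg_inD1.
rewrite big_split /=.
have -> : \sum_(u in S :\ v) e u v = deg_in S v.
  rewrite (deg_inD1 v vS) eirr deg_in_sum.
  by apply: eq_bigr => u _; rewrite esym.
lia.
Qed.

Lemma induced_forestS {S S'} :
  S' \subset S -> induced_forest e S -> induced_forest e S'.
Proof.
move=> /subsetP sub forestS [p [size_p uniq_p /allP pS' cyc]]; apply: forestS.
by exists p; split=> //; apply/allP => x /pS' /sub.
Qed.

Lemma independent_setU1_forest I v :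
  {in I &, forall x y, ~~ e x y} -> induced_forest e (v |: I).
Proof.
move=> indepI [p [size_p uniq_p /allP p_sub cyc]].
(* Rotated to start at [v], the cycle continues with two adjacent vertices
   of [I]. *)
set q := rot (index v p) p.
have v_notin : v \notin behead q.
  have [vp | vNp] := boolP (v \in p).
    move: uniq_p; rewrite -(rot_uniq (index v p)) /q (rot_index vp).
    by case/andP.
  by rewrite /q rot_oversize ?memNindex //; apply: contra vNp => /mem_behead.
have qI : {in q, forall w, w != v -> w \in I}.
  by move=> w; rewrite mem_rot => /p_sub; rewrite !inE => /orP[-> |].
have : cycle e q by rewrite rot_cycle.
move: v_notin qI (size_p); rewrite -(size_rot (index v p)) -/q.
case: q => [|x [|y [|z r]]] //= + qI _ /andP[_ /andP[eyz _]].
rewrite !inE !negb_or => /andP[vy /andP[vz _]].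
have yI : y \in I by apply: qI; rewrite ?inE ?eqxx ?orbT // eq_sym.
have zI : z \in I by apply: qI; rewrite ?inE ?eqxx ?orbT // eq_sym.
by have := indepI y z yI zI; rewrite eyz.
Qed.

Lemma path_chord_cycle S x p y :
  path e x p -> uniq (x :: p) -> {subset x :: p <= S} ->
  e x y -> y \in p -> y != head x p -> has_cycle_in e S.
Proof.
case: p => [//|z p] xzp uniq_xzp sub exy /=.
rewrite inE => /orP[/eqP-> | yp]; first by rewrite eqxx.
case/splitPr: yp xzp uniq_xzp sub => p1 p2 xzp uniq_xzp sub _.
have split_p : z :: p1 ++ y :: p2 = (z :: p1 ++ [:: y]) ++ p2.
  by rewrite /= -catA.
rewrite split_p -cat_cons in xzp uniq_xzp sub.
exists [:: x, z & p1 ++ [:: y]]; split.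
- by rewrite /= size_cat addn1.
- by move: uniq_xzp; rewrite cat_uniq => /andP[].
- by apply/allP => w w_in; apply: sub; rewrite mem_cat w_in.
- move: xzp; rewrite cat_path => /andP[xzy _].
  by rewrite /cycle -cats1 cat_path xzy /= last_cat /= esym exy.
Qed.

Lemma exists_neighbor_other S x z :
  1 < deg_in S x -> exists2 y, y \in S & e x y && (y != z).
Proof.
move=> deg_x; apply/exists_inP; apply: contraTT deg_x => /exists_inPn nb.
rewrite -leqNgt -(cards1 z) subset_leq_card //; apply/subsetP => y.
by rewrite !inE => /andP[yS exy]; move: (nb y yS); rewrite exy negbK.
Qed.

Lemma mindeg2_path_cycle S x p :
  (forall v, v \in S -> 1 < deg_in S v) ->
  path e x p -> uniq (x :: p) -> {subset x :: p <= S} -> has_cycle_in e S.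
Proof.
move=> mindeg; have [k] := ubnP (#|T| - size p).
elim: k x p => // k IHk x p size_p xp uniq_xp sub.
have [y yS /andP[exy y_ne]] :=
  exists_neighbor_other (head x p) (mindeg x (sub x (mem_head x p))).
have [y_in | y_notin] := boolP (y \in x :: p).
  apply: (path_chord_cycle xp uniq_xp sub exy _ y_ne).
  by move: y_in; rewrite inE => /orP[/eqP yx | //]; rewrite yx eirr in exy.
have uniq_yxp : uniq (y :: x :: p) by rewrite /= y_notin.
apply: (IHk y (x :: p)) => //.
- have : size (y :: x :: p) <= #|T| by rewrite -(card_uniqP uniq_yxp) max_card.
  by move: size_p => /=; lia.
- by rewrite /= esym exy.
- by move=> w; rewrite inE => /orP[/eqP-> | /sub].
Qed.

Lemma mindeg2_has_cycle S :
  S != set0 -> (forall v, v \in S -> 1 < deg_in S v) -> has_cycle_in e S.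
Proof.
case/set0Pn => x xS mindeg.
by apply: (@mindeg2_path_cycle S x [::] mindeg) => // w; rewrite inE => /eqP->.
Qed.

Lemma induced_forest_leaf S :
  S != set0 -> induced_forest e S -> exists2 v, v \in S & deg_in S v <= 1.
Proof.
move=> S_ne forestS.
have [/exists_inP // | /exists_inPn noleaf] :=
  boolP [exists v in S, deg_in S v <= 1].
case: forestS; apply: mindeg2_has_cycle => // v /noleaf.
by rewrite -ltnNge.
Qed.

Lemma induced_forest_degsum S :
  S != set0 -> induced_forest e S -> degsum_in S + 2 <= 2 * #|S|.
Proof.
have [k] := ubnP #|S|; elim: k S => // k IHk S card_S S_ne forestS.
have [v vS leaf_v] := induced_forest_leaf S_ne forestS.
rewrite (degsum_inD1 vS) (cardsD1 v S) vS.
have [S'0 | S'_ne] := eqVneq (S :\ v) set0.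
  rewrite (deg_inD1 v vS) eirr S'0 /degsum_in big_set0.
  by rewrite deg_in_sum !big_set0 cards0.
have := IHk (S :\ v) _ S'_ne (induced_forestS (subD1set S v) forestS).
by rewrite (cardsD1 v S) vS in card_S; lia.
Qed.

Definition side_degsum S X : nat := \sum_(x in S :&: X) deg_in S x.

Lemma degsum_in_setID S X :
  degsum_in S = side_degsum S X + side_degsum S (~: X).
Proof. by rewrite /degsum_in (big_setID X) setDE. Qed.

Lemma side_degsumE S {X Y} : {in X, forall x y, e x y -> y \in Y} ->
  side_degsum S X = \sum_(x in S :&: X) \sum_(y in S :&: Y) e x y.
Proof.
move=> nbY; apply: eq_bigr => x /setIP[_ xX].
by rewrite (deg_inI S (nbY x xX)) deg_in_sum.
Qed.

Lemma side_degsum_sym S X Y :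
  {in X, forall x y, e x y -> y \in Y} ->
  {in Y, forall x y, e x y -> y \in X} ->
  side_degsum S X = side_degsum S Y.
Proof.
move=> nbY nbX; rewrite (side_degsumE S nbY) (side_degsumE S nbX) exchange_big.
by apply: eq_bigr => y _; apply: eq_bigr => x _; rewrite esym.
Qed.

Lemma sum_deg_le_side_degsum S X Y : {in X, forall x y, e x y -> y \in Y} ->
  \sum_(x in S :&: X) deg e x <= side_degsum S X + #|S :&: X| * #|Y :\: S|.
Proof.
move=> nbY; rewrite -sum_nat_const -big_split /=.
apply: leq_sum => x /setIP[_ xX].
apply: leq_trans (leq_card_setU _ _); apply/subset_leq_card/subsetP => y.
rewrite !inE => exy.
by rewrite exy (nbY x xX y exy) andbT; case: (y \in S).
Qed.

End InducedSubgraph.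

(* [2 E >= a (b - c + 2)], and [a (b - c) - 2 b >= (a - 2) (b - a) >= 0]
   since [c + 2 <= a]. *)
Lemma half_degree_edge_count (n a b c E : nat) :
  a <= b -> b + c = n -> n + 2 <= a + b -> a * (n + 2) <= 2 * (E + a * c) ->
  a + b <= E.
Proof. nia. Qed.

Section Bipartite.
Variables (T : finType) (e : rel T) (X : {set T}) (n : nat).
Hypotheses (esym : symmetric e) (eirr : irreflexive e).
Hypothesis crossX : forall x y, e x y -> (x \in X) != (y \in X).
Hypothesis card_coX : #|~: X| = n.
Hypothesis mindeg : forall v, n + 2 <= 2 * deg e v.

Lemma bipartite_forest_card S :
  #|S :&: X| <= #|S :&: ~: X| -> induced_forest e S -> #|S| <= n.+1.
Proof.
move=> ab forestS; have [-> | S_ne] := eqVneq S set0; first by rewrite cards0.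
have nb_coX : {in X, forall x y, e x y -> y \in ~: X}.
  by move=> x xX y /crossX; rewrite xX inE; case: (y \in X).
have nb_X : {in ~: X, forall x y, e x y -> y \in X}.
  move=> x; rewrite inE => xX y /crossX.
  by rewrite (negbTE xX); case: (y \in X).
have card_S : #|S| = #|S :&: X| + #|S :&: ~: X| by rewrite -(cardsID X S) setDE.
have card_split : #|S :&: ~: X| + #|~: X :\: S| = n.
  by rewrite -card_coX -(cardsID S (~: X)) setIC.
have degsum_S : degsum_in e S = 2 * side_degsum e S X.
  by rewrite (degsum_in_setID e S X) -(side_degsum_sym esym S nb_coX nb_X); lia.
have lower : #|S :&: X| * (n + 2)
              <= 2 * (side_degsum e S X + #|S :&: X| * #|~: X :\: S|).
  apply: (@leq_trans (\sum_(x in S :&: X) 2 * deg e x)).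
    by rewrite -sum_nat_const; apply: leq_sum => x _; apply: mindeg.
  by rewrite -big_distrr leq_mul2l /= (sum_deg_le_side_degsum S nb_coX).
rewrite leqNgt; apply/negP => large.
have edges_ge := half_degree_edge_count ab card_split (ltac:(lia)) lower.
have := induced_forest_degsum esym eirr S_ne forestS; lia.
Qed.

End Bipartite.

Theorem theorem1 (T : finType) (e : rel T) (n : nat) (V1 V2 : {set T}) :
  0 < n ->
  simple_graph e ->
  balanced_bipartite e n V1 V2 ->
  (forall v : T, n + 2 <= 2 * deg e v) ->
  forest_number_is e n.+1.
Proof.
move=> n_gt0 [esym eirr] [disV cover card_V1 card_V2 crossV] mindeg.
have V2E : V2 = ~: V1.
  apply/setP => x; rewrite inE; move/setP/(_ x): cover; rewrite !inE.
  by move/disjoint_setI0/setP/(_ x): disV; rewrite !inE; do 2 case: (_ \in _).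
have cross : forall x y, e x y -> (x \in V1) != (y \in V1).
  move=> x y /crossV; rewrite V2E !inE.
  by case=> [[-> /negbTE->] | [/negbTE-> ->]].
split.
- have [v vV2] : exists v, v \in V2 by apply/set0Pn; rewrite -card_gt0 card_V2.
  exists (v |: V1); split.
    apply: independent_setU1_forest => x y xV1 yV1.
    by apply: contraTN xV1 => /cross; rewrite yV1; case: (x \in V1).
  by rewrite cardsU1 card_V1 -in_setC -V2E vV2.
- move=> S forestS.
  have [le_ab | lt_ba] := leqP #|S :&: V1| #|S :&: ~: V1|.
    apply: (bipartite_forest_card esym eirr cross _ mindeg) => //.
    by rewrite -V2E.
  apply: (@bipartite_forest_card _ _ (~: V1) _ esym eirr _ _ mindeg) => //.
  - by move=> x y /cross; rewrite !inE; case: (x \in V1); case: (y \in V1).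
  - by rewrite setCK.
  - by rewrite setCK ltnW.
Qed.
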